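(* Let $\psi_C(t)=\exp[-t\tanh t]$, $\psi_S(t)=\exp[1-t\coth t]$ and $\psi_T(t)=\exp[\frac{2t}{\sinh(2t)}-1]$ (the background driving characteristic functions of $1/\cosh t$, $t/\sinh t$ and $\tanh t/t$ respectively). Their free analogues have Voiculescu transforms, for $t>0$: (a) $V_{\tilde\psi_C}(it)=i\big[\tfrac{t^2}{2}\zeta(2,\tfrac t2)-\tfrac{t^2}{4}\zeta(2,\tfrac t4)+1\big]$; (b) $V_{\tilde\psi_S}(it)=i\big[1+t-\tfrac12t^2\zeta(2,\tfrac t2)\big]$; (c) $V_{\tilde\psi_T}(it)=it\big[t\zeta(2,\tfrac t2)-\tfrac t4\zeta(2,\tfrac t4)-1\big]=it\big[\tfrac t4\zeta(2,\tfrac{t+2}{4})-1\big]$.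
   Context: $\zeta(s,a):=\sum_{k=0}^\infty(k+a)^{-s}$ is the Hurwitz zeta function ($s>1$, $a>0$). For an infinitely divisible characteristic function $\phi$ with Khintchine exponent $\log\phi$ (the continuous logarithm with $\log\phi(0)=0$; here e.g. $\log\psi_C(t)=-t\tanh t$), its free analogue $\tilde\phi$ is the $\boxplus$-infinitely divisible probability measure whose Voiculescu transform satisfies $V_{\tilde\phi}(it)=it^2\int_0^\infty\overline{\log\phi(s)}e^{-ts}ds$ for $t>0$. *)

From Stdlib Require Import Reals ClassicalEpsilon.
Open Scope R_scope.

(* Complex numbers as pairs (real part, imaginary part). *)
Definition C : Type := (R * R)%type.

(* Hurwitz zeta: zeta(s,a) = sum_{k>=0} (k+a)^(-s)  (meaningful for s>1, a>0). *)
Definition hurwitz_zeta (s a : R) : R :=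
  epsilon (inhabits 0)
    (fun z => infinite_sum (fun k => Rpower (INR k + a) (- s)) z).

Definition improper_integral_0_inf (f : R -> R) (l : R) : Prop :=
  (forall b, 0 < b -> inhabited (Riemann_integrable f 0 b)) /\
  (forall eps, 0 < eps -> exists M, forall b (pr : Riemann_integrable f 0 b),
      0 < b -> M < b -> Rabs (RiemannInt pr - l) < eps).

(* [voiculescu_free_at L t v]: v is the value V_{~phi}(it) of the Voiculescu
   transform of the free analogue of phi, where L = log phi (Khintchine exponent,
   complex valued), i.e.  v = i t^2 \int_0^oo conj(L(s)) e^{-ts} ds.
   Writing L = a + i b, conj L = a - i b, so with
   A = \int a e^{-ts}, B = \int (-b) e^{-ts}:  v = i t^2 (A + i B) = (-t^2 B, t^2 A). *)
Definition voiculescu_free_at (L : R -> C) (t : R) (v : C) : Prop :=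
  exists A B,
    improper_integral_0_inf (fun s => fst (L s) * exp (- (t * s))) A /\
    improper_integral_0_inf (fun s => - snd (L s) * exp (- (t * s))) B /\
    v = (- (t ^ 2) * B, t ^ 2 * A).

Definition psi_C (t : R) : R := exp (- (t * tanh t)).
Definition psi_S (t : R) : R :=
  if Req_EM_T t 0 then 1 else exp (1 - t * (cosh t / sinh t)).
Definition psi_T (t : R) : R :=
  if Req_EM_T t 0 then 1 else exp (2 * t / sinh (2 * t) - 1).

(* Their Khintchine exponents (continuous logarithms with log phi(0) = 0);
   since psi_* are positive reals and the exponents are continuous (extended
   by continuity at 0), the continuous logarithm is the real exponent. *)
Definition log_psi_C (t : R) : C := (- (t * tanh t), 0).
Definition log_psi_S (t : R) : C :=
  (if Req_EM_T t 0 then 0 else 1 - t * (cosh t / sinh t), 0).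
Definition log_psi_T (t : R) : C :=
  (if Req_EM_T t 0 then 0 else 2 * t / sinh (2 * t) - 1, 0).

(* Writing the hyperbolic functions in terms of [exp (- 2 s)], each Khintchine exponent times
   [exp (- t s)] becomes a combination of [exp (- t s)], [s exp (- t s)] and the kernels [s exp (- c s) / (1 - exp (- m s))] with [m = 2, 4].
   Expanding such a kernel as a geometric series in [exp (- m s)] and integrating termwise
   gives [sum_k 1 / (c + m k) ^ 2 = zeta(2, c / m) / m ^ 2]; the termwise integration is
   justified by monotonicity: partial sums bound the integral from below, and the remainder
   after [n] terms contributes at most [O(1 / n)] on every bounded interval.  The two forms of
   (c) come from splitting the kernel with [m = 2] into its even and odd terms. *)

From Stdlib Require Import Reals ClassicalEpsilon Lra.
From Coquelicot Require Import Coquelicot.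
Open Scope R_scope.

(** * Improper integrals over [0, oo) *)

Definition is_RInt_0_inf (f : R -> R) (l : R) : Prop :=
  (forall b, 0 < b -> ex_RInt f 0 b) /\ is_lim (fun b => RInt f 0 b) p_infty l.

Lemma improper_integral_0_inf_of (f : R -> R) (l : R) :
  is_RInt_0_inf f l -> improper_integral_0_inf f l.
Proof.
  intros [ex lim]; split.
  - intros b hb; constructor; apply ex_RInt_Reals_0; auto.
  - intros eps heps. destruct (proj2 (is_lim_spec _ _ _) lim (mkposreal eps heps)) as [M HM].
    exists M; intros b pr _ hM. rewrite <- RInt_Reals. exact (HM b hM).
Qed.

Lemma is_RInt_0_inf_ext (f g : R -> R) (l : R) :
  (forall s, 0 <= s -> f s = g s) -> is_RInt_0_inf f l -> is_RInt_0_inf g l.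
Proof.
  intros efg [ex lim].
  assert (eRInt : forall b, 0 < b -> RInt f 0 b = RInt g 0 b).
  { intros b hb. apply RInt_ext. intros x; rewrite Rmin_left, Rmax_right by lra.
    intros hx; apply efg; lra. }
  split.
  - intros b hb. apply (ex_RInt_ext f); auto.
    intros x; rewrite Rmin_left, Rmax_right by lra. intros hx; apply efg; lra.
  - apply (is_lim_ext_loc (fun b => RInt f 0 b)); auto. exists 0; auto.
Qed.

Lemma is_RInt_0_inf_plus (f g : R -> R) (lf lg : R) :
  is_RInt_0_inf f lf -> is_RInt_0_inf g lg -> is_RInt_0_inf (fun s => f s + g s) (lf + lg).
Proof.
  intros [exf limf] [exg limg]; split.
  - intros b hb; apply (ex_RInt_plus f g); auto.
  - apply (is_lim_ext_loc (fun b => RInt f 0 b + RInt g 0 b)).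
    + exists 0; intros b hb. symmetry; apply (RInt_plus f g); auto.
    + apply is_lim_plus'; auto.
Qed.

Lemma is_RInt_0_inf_scal (k : R) (f : R -> R) (l : R) :
  is_RInt_0_inf f l -> is_RInt_0_inf (fun s => k * f s) (k * l).
Proof.
  intros [ex lim]; split.
  - intros b hb; apply (ex_RInt_scal f); auto.
  - apply (is_lim_ext_loc (fun b => k * RInt f 0 b)).
    + exists 0; intros b hb. symmetry; apply (RInt_scal f); auto.
    + apply (is_lim_scal_l _ k _ l lim).
Qed.

Lemma is_RInt_0_inf_minus (f g : R -> R) (lf lg : R) :
  is_RInt_0_inf f lf -> is_RInt_0_inf g lg -> is_RInt_0_inf (fun s => f s - g s) (lf - lg).
Proof.
  intros hf hg. replace (lf - lg) with (lf + -1 * lg) by ring.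
  apply (is_RInt_0_inf_ext (fun s => f s + -1 * g s)); [intros; ring|].
  apply is_RInt_0_inf_plus, is_RInt_0_inf_scal; auto.
Qed.

Lemma is_RInt_0_inf_sum (f : nat -> R -> R) (l : nat -> R) n :
  (forall k, is_RInt_0_inf (f k) (l k)) ->
  is_RInt_0_inf (fun s => sum_f_R0 (fun k => f k s) n) (sum_f_R0 l n).
Proof.
  intros hf; induction n as [|n IH]; [exact (hf 0%nat)|].
  exact (is_RInt_0_inf_plus _ _ _ _ IH (hf (S n))).
Qed.

Lemma RInt_le_is_RInt_0_inf (f : R -> R) (l b : R) :
  (forall s, 0 <= s -> 0 <= f s) -> is_RInt_0_inf f l -> 0 < b -> RInt f 0 b <= l.
Proof.
  intros hf [ex lim] hb.
  change (Rbar_le (RInt f 0 b) l).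
  apply (is_lim_le_loc (fun _ => RInt f 0 b) (fun y => RInt f 0 y) p_infty);
    [|apply is_lim_const|exact lim].
  exists b; intros y hy.
  rewrite <- (RInt_Chasles f 0 b y); auto.
  - assert (0 <= RInt f b y).
    { apply RInt_ge_0; [lra| |intros; apply hf; lra].
      apply (ex_RInt_Chasles_2 f 0); [lra|]. apply ex; lra. }
    unfold plus; simpl; lra.
  - apply (ex_RInt_Chasles_2 f 0); [lra|]. apply ex; lra.
Qed.

Lemma is_RInt_0_inf_antiderivative (F f : R -> R) (L : R) :
  (forall x, 0 <= x -> is_derive F x (f x)) -> (forall x, 0 <= x -> continuous f x) ->
  is_lim F p_infty L -> is_RInt_0_inf f (L - F 0).
Proof.
  intros dF cf limF.
  assert (ftc : forall b, 0 < b -> is_RInt f 0 b (F b - F 0)).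
  { intros b hb. apply (is_RInt_derive F f); rewrite Rmin_left, Rmax_right by lra;
      intros x hx; [apply dF|apply cf]; lra. }
  split.
  - intros b hb; eexists; apply ftc; auto.
  - apply (is_lim_ext_loc (fun b => F b - F 0)).
    + exists 0; intros b hb. symmetry; apply is_RInt_unique, ftc; auto.
    + apply (is_lim_minus' F (fun _ => F 0)); [auto|apply is_lim_const].
Qed.

Lemma is_RInt_0_inf_0 : is_RInt_0_inf (fun _ => 0) 0.
Proof.
  pose proof (is_RInt_0_inf_antiderivative (fun _ => 0) (fun _ => 0) 0) as h.
  rewrite Rminus_0_r in h. apply h.
  - intros; auto_derive; auto.
  - intros; apply continuous_const.
  - apply is_lim_const.
Qed.

Lemma is_lim_scal_p_infty c : 0 < c -> is_lim (fun s => c * s) p_infty p_infty.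
Proof.
  intros hc. apply is_lim_spec; intros M. exists (M / c); intros x hx.
  apply (Rmult_lt_compat_l c) in hx; auto. now replace (c * (M / c)) with M in hx by (field; lra).
Qed.

Lemma is_lim_seq_affine_INR c m : 0 < m -> is_lim_seq (fun n => c + m * INR n) p_infty.
Proof.
  intros hm. apply is_lim_seq_spec; intros M.
  destruct (INR_unbounded ((M - c) / m)) as [N hN]. exists N; intros n hn.
  apply le_INR in hn.
  apply (Rmult_lt_compat_l m) in hN; auto.
  replace (m * ((M - c) / m)) with (M - c) in hN by (field; lra). nra.
Qed.

Lemma is_lim_p_infty_of_lower_approx (f : R -> R) (g : nat -> R -> R) (s : nat -> R) (l : R) :
  (forall b, 0 < b -> f b <= l) -> (forall n b, 0 < b -> g n b <= f b) ->
  (forall n, is_lim (g n) p_infty (s n)) -> is_lim_seq s l -> is_lim f p_infty l.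
Proof.
  intros fl gf glim slim. apply is_lim_spec; intros eps.
  assert (heps2 : 0 < eps / 2) by (pose proof (cond_pos eps); lra).
  destruct (proj2 (is_lim_seq_spec _ _) slim (mkposreal _ heps2)) as [N hN].
  destruct (proj2 (is_lim_spec _ _ _) (glim N) (mkposreal _ heps2)) as [M hM].
  exists (Rmax M 0); intros b hb.
  specialize (hN N (le_n N)); specialize (hM b (Rle_lt_trans _ _ _ (Rmax_l _ _) hb)).
  assert (b0 : 0 < b) by (pose proof (Rmax_r M 0); lra).
  specialize (fl b b0); specialize (gf N b b0). simpl in hN, hM.
  revert hN hM; unfold Rabs; repeat destruct Rcase_abs; lra.
Qed.

Lemma is_lim_exp_opp_mul c : 0 < c -> is_lim (fun s => exp (- (c * s))) p_infty 0.
Proof.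
  intros hc. apply (is_lim_comp exp (fun s => - (c * s)) p_infty 0 m_infty).
  - exact is_lim_exp_m.
  - apply (is_lim_opp (fun s => c * s) p_infty p_infty), is_lim_scal_p_infty; auto.
  - exists 0; discriminate.
Qed.

Lemma is_lim_mul_exp_opp_mul c : 0 < c -> is_lim (fun s => s * exp (- (c * s))) p_infty 0.
Proof.
  intros hc.
  assert (lim : is_lim (fun s => exp (c * s) / (c * s)) p_infty p_infty).
  { apply (is_lim_comp (fun y => exp y / y) (fun s => c * s) p_infty p_infty p_infty).
    - exact is_lim_div_exp_p.
    - apply is_lim_scal_p_infty; auto.
    - exists 0; discriminate. }
  apply (is_lim_ext_loc (fun s => / c * / (exp (c * s) / (c * s)))).
  - exists 0; intros s hs. rewrite exp_Ropp. field.
    pose proof (exp_pos (c * s)). repeat split; nra.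
  - replace (Finite 0) with (Rbar_mult (/ c) (Rbar_inv p_infty)) by (simpl; f_equal; ring).
    apply is_lim_scal_l, is_lim_inv; [exact lim|discriminate].
Qed.

Lemma is_RInt_0_inf_exp c : 0 < c -> is_RInt_0_inf (fun s => exp (- (c * s))) (/ c).
Proof.
  intros hc. replace (/ c) with (0 - (- exp (- (c * 0)) / c))
    by (rewrite Rmult_0_r, Ropp_0, exp_0; field; lra).
  apply (is_RInt_0_inf_antiderivative (fun s => - exp (- (c * s)) / c)).
  - intros x _. auto_derive; auto. field; lra.
  - intros x _. apply (ex_derive_continuous (K := R_AbsRing) (V := R_NormedModule)).
    auto_derive; auto.
  - replace (Finite 0) with (Rbar_mult (- / c) 0) by (simpl; f_equal; ring).
    apply (is_lim_ext_loc (fun s => - / c * exp (- (c * s)))).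
    + exists 0; intros; field; lra.
    + apply is_lim_scal_l, is_lim_exp_opp_mul; auto.
Qed.

Lemma is_RInt_0_inf_mul_exp c :
  0 < c -> is_RInt_0_inf (fun s => s * exp (- (c * s))) (/ c ^ 2).
Proof.
  intros hc. set (F s := - (/ c * (s * exp (- (c * s))) + / c ^ 2 * exp (- (c * s)))).
  replace (/ c ^ 2) with (0 - F 0) by (unfold F; rewrite Rmult_0_r, Ropp_0, exp_0; field; lra).
  apply (is_RInt_0_inf_antiderivative F).
  - intros x _. unfold F. auto_derive; auto. field; lra.
  - intros x _. apply (ex_derive_continuous (K := R_AbsRing) (V := R_NormedModule)).
    auto_derive; auto.
  - assert (h1 : is_lim (fun s => / c * (s * exp (- (c * s)))) p_infty 0).
    { replace (Finite 0) with (Rbar_mult (/ c) 0) by (simpl; f_equal; ring).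
      apply is_lim_scal_l, is_lim_mul_exp_opp_mul; auto. }
    assert (h2 : is_lim (fun s => / c ^ 2 * exp (- (c * s))) p_infty 0).
    { replace (Finite 0) with (Rbar_mult (/ c ^ 2) 0) by (simpl; f_equal; ring).
      apply is_lim_scal_l, is_lim_exp_opp_mul; auto. }
    replace (Finite 0) with (Rbar_opp (0 + 0)) by (simpl; f_equal; ring).
    apply is_lim_opp, is_lim_plus'; auto.
Qed.

(** * The Hurwitz zeta function at [s = 2] *)

Lemma hurwitz_zeta_eq s a z :
  infinite_sum (fun k => Rpower (INR k + a) (- s)) z -> hurwitz_zeta s a = z.
Proof.
  intros hz. unfold hurwitz_zeta.
  apply (UL_sequence (sum_f_R0 (fun k => Rpower (INR k + a) (- s)))); [|exact hz].
  apply (epsilon_spec (inhabits 0) (fun z => infinite_sum _ z)). now exists z.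
Qed.

(* Telescoping against [2 / (k + 1) - 2 / (k + 2)], which dominates [/ (k + 1 + a) ^ 2]. *)
Lemma sum_inv_sqr_shift_le a n : 0 < a ->
  sum_f_R0 (fun k => / (INR k + a) ^ 2) n <= / a ^ 2 + 2 - 2 / (INR n + 1).
Proof.
  intros ha. induction n as [|n IH].
  - simpl. replace (0 + a) with a by ring. replace (2 / (0 + 1)) with 2 by field. lra.
  - rewrite tech5. rewrite !S_INR. pose proof (pos_INR n).
    assert (/ (INR n + 1 + a) ^ 2 <= 2 / (INR n + 1) - 2 / (INR n + 1 + 1)).
    { replace (2 / (INR n + 1) - 2 / (INR n + 1 + 1))
        with (/ ((INR n + 1) * (INR n + 2) / 2)) by (field; lra).
      apply Rinv_le_contravar; [apply Rdiv_lt_0_compat|]; nra. }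
    lra.
Qed.

Lemma is_lim_seq_hurwitz_zeta_2 a : 0 < a ->
  is_lim_seq (sum_f_R0 (fun k => / (INR k + a) ^ 2)) (hurwitz_zeta 2 a).
Proof.
  intros ha.
  assert (pos : forall k, 0 < / (INR k + a) ^ 2).
  { intro k; pose proof (pos_INR k); apply Rinv_0_lt_compat, pow_lt; lra. }
  assert (incr : Un_growing (sum_f_R0 (fun k => / (INR k + a) ^ 2))).
  { intro n; rewrite tech5; specialize (pos (S n)); lra. }
  assert (bnd : has_ub (sum_f_R0 (fun k => / (INR k + a) ^ 2))).
  { exists (/ a ^ 2 + 2). intros x [n ->]. pose proof (sum_inv_sqr_shift_le a n ha).
    pose proof (pos_INR n). assert (0 < 2 / (INR n + 1)) by (apply Rdiv_lt_0_compat; lra). lra. }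
  destruct (growing_cv _ incr bnd) as [z hz].
  replace (hurwitz_zeta 2 a) with z; [now apply is_lim_seq_Reals|].
  symmetry; apply hurwitz_zeta_eq. intros eps heps. destruct (hz eps heps) as [N HN].
  exists N; intros n hn. rewrite (sum_eq _ (fun k => / (INR k + a) ^ 2)); auto.
  intros k _. pose proof (pos_INR k).
  rewrite Rpower_Ropp, <- Rpower_pow by lra. simpl INR. now replace (1 + 1) with 2 by ring.
Qed.

Lemma is_lim_seq_hurwitz_zeta_2_scaled c m : 0 < c -> 0 < m ->
  is_lim_seq (sum_f_R0 (fun k => / (c + m * INR k) ^ 2)) (hurwitz_zeta 2 (c / m) / m ^ 2).
Proof.
  intros hc hm.
  apply (is_lim_seq_ext (fun n => / m ^ 2 * sum_f_R0 (fun k => / (INR k + c / m) ^ 2) n)).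
  - intros n. rewrite scal_sum. apply sum_eq. intros k _. pose proof (pos_INR k).
    assert (0 < c + m * INR k) by nra.
    replace (INR k + c / m) with ((c + m * INR k) / m) by (field; lra). field; lra.
  - replace (Finite (hurwitz_zeta 2 (c / m) / m ^ 2))
      with (Rbar_mult (/ m ^ 2) (hurwitz_zeta 2 (c / m))) by (simpl; f_equal; field; lra).
    apply is_lim_seq_scal_l, is_lim_seq_hurwitz_zeta_2, Rdiv_lt_0_compat; auto.
Qed.

(** * The Hurwitz kernel *)

Lemma exp_opp_lt_1 x : 0 < x -> exp (- x) < 1.
Proof. intros hx. rewrite <- exp_0. apply exp_increasing. lra. Qed.

Lemma exp_opp_mult_plus a b s : exp (- ((a + b) * s)) = exp (- (a * s)) * exp (- (b * s)).
Proof. rewrite <- exp_plus; f_equal; ring. Qed.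

Lemma exp_opp_mult_double m s : exp (- (2 * m * s)) = exp (- (m * s)) ^ 2.
Proof. replace (- (2 * m * s)) with (- (m * s) + - (m * s)) by ring. rewrite exp_plus. ring. Qed.

Lemma exp_opp_double_Rinv s : exp (- (2 * s)) = / exp s ^ 2.
Proof. rewrite exp_Ropp. f_equal. replace (2 * s) with (s + s) by ring. rewrite exp_plus. ring. Qed.

Lemma exp_opp_quadruple s : exp (- (4 * s)) = exp (- (2 * s)) ^ 2.
Proof. replace (4 * s) with (2 * 2 * s) by ring. apply exp_opp_mult_double. Qed.

Definition exp_slope (m s : R) : R :=
  if Req_EM_T s 0 then m else (1 - exp (- (m * s))) / s.

(* [s exp (- c s) / (1 - exp (- m s))], written as a quotient of functions continuous at [0]. *)
Definition hurwitz_kernel (c m s : R) : R := exp (- (c * s)) / exp_slope m s.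

Lemma exp_slope_pos m s : 0 < m -> 0 <= s -> 0 < exp_slope m s.
Proof.
  intros hm hs. unfold exp_slope. destruct Req_EM_T as [|hs0]; auto.
  apply Rdiv_lt_0_compat; [|lra]. pose proof (exp_opp_lt_1 (m * s)). nra.
Qed.

Lemma continuous_exp_slope m s : continuous (exp_slope m) s.
Proof.
  destruct (Req_EM_T s 0) as [->|hs].
  - apply continuity_pt_filterlim.
    assert (D : derivable_pt_lim (fun x => 1 - exp (- (m * x))) 0 m).
    { apply is_derive_Reals. auto_derive; auto. rewrite Rmult_0_r, Ropp_0, exp_0. ring. }
    intros eps heps. destruct (D eps heps) as [delta Hdelta].
    exists delta; split; [apply cond_pos|]. intros x [_ hx]. simpl in hx |- *.
    unfold R_dist in *. rewrite Rminus_0_r in hx.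
    unfold exp_slope. destruct (Req_EM_T 0 0) as [_|]; [|lra].
    destruct (Req_EM_T x 0) as [->|hx0]; [rewrite Rminus_diag, Rabs_R0; auto|].
    specialize (Hdelta x hx0 hx). rewrite Rplus_0_l, Rmult_0_r, Ropp_0, exp_0 in Hdelta.
    now replace ((1 - exp (- (m * x))) / x) with ((1 - exp (- (m * x)) - (1 - 1)) / x)
      by (field; auto).
  - apply (continuous_ext_loc _ (fun x => (1 - exp (- (m * x))) / x)).
    + assert (hr : 0 < Rabs s) by (apply Rabs_pos_lt; auto).
      exists (mkposreal _ hr). intros y hy. unfold exp_slope.
      destruct Req_EM_T as [->|]; auto. exfalso.
      unfold ball in hy; simpl in hy; unfold AbsRing_ball, abs, minus, plus, opp in hy; simpl in hy.
      rewrite Rplus_0_l, Rabs_Ropp in hy. lra.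
    + apply (ex_derive_continuous (K := R_AbsRing) (V := R_NormedModule)). auto_derive; auto.
Qed.

Lemma continuous_hurwitz_kernel c m s : 0 < m -> 0 <= s -> continuous (hurwitz_kernel c m) s.
Proof.
  intros hm hs. apply continuity_pt_filterlim.
  change (continuity_pt (div_fct (fun s => exp (- (c * s))) (exp_slope m)) s).
  apply continuity_pt_div.
  - apply continuity_pt_filterlim.
    apply (ex_derive_continuous (K := R_AbsRing) (V := R_NormedModule) (fun s => exp (- (c * s)))).
    auto_derive; auto.
  - apply continuity_pt_filterlim, continuous_exp_slope.
  - apply Rgt_not_eq, exp_slope_pos; auto.
Qed.

Lemma hurwitz_kernel_0 c m : hurwitz_kernel c m 0 = / m.
Proof.
  unfold hurwitz_kernel, exp_slope. destruct Req_EM_T; [|lra].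
  rewrite Rmult_0_r, Ropp_0, exp_0. unfold Rdiv; ring.
Qed.

Lemma hurwitz_kernel_pos c m s : 0 < m -> 0 < s ->
  hurwitz_kernel c m s = s * exp (- (c * s)) / (1 - exp (- (m * s))).
Proof.
  intros hm hs. unfold hurwitz_kernel, exp_slope. destruct Req_EM_T; [lra|].
  pose proof (exp_opp_lt_1 (m * s)). field; split; nra.
Qed.

Lemma inv_exp_slope_le m s : 0 < m -> 0 <= s -> / exp_slope m s <= / m + s.
Proof.
  intros hm hs. unfold exp_slope. destruct Req_EM_T as [|hs0]; [lra|].
  assert (hms : 0 < m * s) by nra.
  pose proof (exp_ineq1 (m * s) ltac:(lra)). pose proof (exp_pos (m * s)).
  replace (/ ((1 - exp (- (m * s))) / s)) with (s * exp (m * s) / (exp (m * s) - 1))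
    by (rewrite exp_Ropp; field; repeat split; lra).
  apply Rmult_le_reg_r with (m * (exp (m * s) - 1)); [nra|].
  replace (s * exp (m * s) / (exp (m * s) - 1) * (m * (exp (m * s) - 1)))
    with (m * s * exp (m * s)) by (field; lra).
  replace ((/ m + s) * (m * (exp (m * s) - 1))) with ((1 + m * s) * (exp (m * s) - 1))
    by (field; lra).
  nra.
Qed.

Lemma hurwitz_kernel_bounds c m s : 0 < m -> 0 <= s ->
  0 <= hurwitz_kernel c m s <= exp (- (c * s)) * (/ m + s).
Proof.
  intros hm hs. pose proof (exp_pos (- (c * s))). pose proof (exp_slope_pos m s hm hs).
  unfold hurwitz_kernel. split.
  - left; apply Rdiv_lt_0_compat; auto.
  - apply Rmult_le_compat_l; [lra|]. apply inv_exp_slope_le; auto.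
Qed.

Lemma hurwitz_kernel_shift c m s : 0 < m -> 0 <= s ->
  hurwitz_kernel c m s = s * exp (- (c * s)) + hurwitz_kernel (c + m) m s.
Proof.
  intros hm hs. destruct (Req_dec s 0) as [->|hs0].
  - rewrite !hurwitz_kernel_0, Rmult_0_l. ring.
  - rewrite !hurwitz_kernel_pos, exp_opp_mult_plus by lra.
    pose proof (exp_opp_lt_1 (m * s)). field. nra.
Qed.

Definition hurwitz_kernel_partial (c m : R) (n : nat) (s : R) : R :=
  sum_f_R0 (fun k => s * exp (- ((c + m * INR k) * s))) n.

Lemma hurwitz_kernel_partial_ge0 c m n s : 0 <= s -> 0 <= hurwitz_kernel_partial c m n s.
Proof.
  intros hs. apply cond_pos_sum. intros k.
  pose proof (exp_pos (- ((c + m * INR k) * s))). nra.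
Qed.

Lemma hurwitz_kernel_telescope c m n s : 0 < m -> 0 <= s ->
  hurwitz_kernel c m s =
  hurwitz_kernel_partial c m n s + hurwitz_kernel (c + m * INR (S n)) m s.
Proof.
  intros hm hs. unfold hurwitz_kernel_partial. induction n as [|n IH].
  - simpl. rewrite Rmult_0_r, Rplus_0_r, Rmult_1_r. apply hurwitz_kernel_shift; auto.
  - rewrite IH, tech5, (hurwitz_kernel_shift (c + m * INR (S n)) m s hm hs), (S_INR (S n)).
    replace (c + m * (INR (S n) + 1)) with (c + m * INR (S n) + m) by ring. ring.
Qed.

Lemma hurwitz_kernel_split c m s : 0 < m -> 0 <= s ->
  hurwitz_kernel c m s = hurwitz_kernel c (2 * m) s + hurwitz_kernel (c + m) (2 * m) s.
Proof.
  intros hm hs. destruct (Req_dec s 0) as [->|hs0].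
  - rewrite !hurwitz_kernel_0. field; lra.
  - rewrite !hurwitz_kernel_pos, exp_opp_mult_plus, exp_opp_mult_double by lra.
    pose proof (exp_opp_lt_1 (m * s)). pose proof (exp_pos (- (m * s))). field. nra.
Qed.

Lemma is_RInt_0_inf_hurwitz_kernel_partial c m n : 0 < c -> 0 < m ->
  is_RInt_0_inf (hurwitz_kernel_partial c m n) (sum_f_R0 (fun k => / (c + m * INR k) ^ 2) n).
Proof.
  intros hc hm. apply (is_RInt_0_inf_sum (fun k s => s * exp (- ((c + m * INR k) * s)))).
  intros k. apply is_RInt_0_inf_mul_exp. pose proof (pos_INR k). nra.
Qed.

Lemma ex_RInt_hurwitz_kernel c m b : 0 < m -> 0 < b -> ex_RInt (hurwitz_kernel c m) 0 b.
Proof.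
  intros hm hb. apply (ex_RInt_continuous (V := R_CompleteNormedModule)).
  rewrite Rmin_left, Rmax_right by lra. intros s hs. apply continuous_hurwitz_kernel; lra.
Qed.

Lemma RInt_hurwitz_kernel_telescope c m n b : 0 < c -> 0 < m -> 0 < b ->
  RInt (hurwitz_kernel c m) 0 b =
  RInt (hurwitz_kernel_partial c m n) 0 b + RInt (hurwitz_kernel (c + m * INR (S n)) m) 0 b.
Proof.
  intros hc hm hb. rewrite <- (RInt_plus (V := R_CompleteNormedModule)).
  - apply RInt_ext. rewrite Rmin_left, Rmax_right by lra. intros s hs.
    apply hurwitz_kernel_telescope; lra.
  - apply is_RInt_0_inf_hurwitz_kernel_partial; auto.
  - apply ex_RInt_hurwitz_kernel; auto.
Qed.

Lemma RInt_hurwitz_kernel_le c m b : 0 < c -> 0 < m -> 0 < b ->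
  RInt (hurwitz_kernel c m) 0 b <= (/ m + b) / c.
Proof.
  intros hc hm hb.
  assert (exE : ex_RInt (fun s => exp (- (c * s))) 0 b) by (apply (is_RInt_0_inf_exp c); auto).
  apply Rle_trans with (RInt (fun s => (/ m + b) * exp (- (c * s))) 0 b).
  - apply RInt_le; [lra|apply ex_RInt_hurwitz_kernel; auto| |].
    { apply (ex_RInt_scal (V := R_NormedModule)); auto. }
    intros s hs. destruct (hurwitz_kernel_bounds c m s hm ltac:(lra)) as [_ hK].
    pose proof (exp_pos (- (c * s))). nra.
  - rewrite (RInt_scal (V := R_CompleteNormedModule)) by auto. apply Rmult_le_compat_l.
    + pose proof (Rinv_0_lt_compat m hm); lra.
    + apply RInt_le_is_RInt_0_inf; [intros s _; left; apply exp_pos|apply is_RInt_0_inf_exp|]; auto.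
Qed.

Lemma RInt_hurwitz_kernel_le_hurwitz_zeta c m b : 0 < c -> 0 < m -> 0 < b ->
  RInt (hurwitz_kernel c m) 0 b <= hurwitz_zeta 2 (c / m) / m ^ 2.
Proof.
  intros hc hm hb.
  assert (pos : forall n, 0 < c + m * INR n) by (intros n; pose proof (pos_INR n); nra).
  assert (bound : forall n, RInt (hurwitz_kernel c m) 0 b <=
    sum_f_R0 (fun k => / (c + m * INR k) ^ 2) n + (/ m + b) / (c + m * INR (S n))).
  { intros n. rewrite (RInt_hurwitz_kernel_telescope c m n b) by auto.
    pose proof (RInt_hurwitz_kernel_le (c + m * INR (S n)) m b (pos (S n)) hm hb).
    assert (RInt (hurwitz_kernel_partial c m n) 0 b <= sum_f_R0 (fun k => / (c + m * INR k) ^ 2) n).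
    { apply RInt_le_is_RInt_0_inf; [intros; apply hurwitz_kernel_partial_ge0; auto| |auto].
      apply is_RInt_0_inf_hurwitz_kernel_partial; auto. }
    lra. }
  assert (lim : is_lim_seq
    (fun n => sum_f_R0 (fun k => / (c + m * INR k) ^ 2) n + (/ m + b) / (c + m * INR (S n)))
    (hurwitz_zeta 2 (c / m) / m ^ 2 + (/ m + b) * 0)).
  { apply is_lim_seq_plus'; [apply is_lim_seq_hurwitz_zeta_2_scaled; auto|].
    replace (Finite ((/ m + b) * 0)) with (Rbar_mult (/ m + b) (Rbar_inv p_infty))
      by (simpl; f_equal; ring).
    apply is_lim_seq_scal_l, is_lim_seq_inv; [|discriminate].
    apply (is_lim_seq_incr_1 (fun n => c + m * INR n)), is_lim_seq_affine_INR; auto. }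
  pose proof (is_lim_seq_le _ _ _ _ bound (is_lim_seq_const _) lim) as le.
  rewrite Rmult_0_r, Rplus_0_r in le. exact le.
Qed.

Theorem is_RInt_0_inf_hurwitz_kernel c m : 0 < c -> 0 < m ->
  is_RInt_0_inf (hurwitz_kernel c m) (hurwitz_zeta 2 (c / m) / m ^ 2).
Proof.
  intros hc hm. split; [intros b hb; apply ex_RInt_hurwitz_kernel; auto|].
  apply (is_lim_p_infty_of_lower_approx _ (fun n b => RInt (hurwitz_kernel_partial c m n) 0 b)
           (sum_f_R0 (fun k => / (c + m * INR k) ^ 2))).
  - intros b hb. apply RInt_hurwitz_kernel_le_hurwitz_zeta; auto.
  - intros n b hb. rewrite (RInt_hurwitz_kernel_telescope c m n b) by auto.
    assert (0 <= RInt (hurwitz_kernel (c + m * INR (S n)) m) 0 b); [|lra].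
    apply RInt_ge_0; [lra|apply ex_RInt_hurwitz_kernel; auto|].
    intros s hs. apply hurwitz_kernel_bounds; lra.
  - intros n. apply is_RInt_0_inf_hurwitz_kernel_partial; auto.
  - apply is_lim_seq_hurwitz_zeta_2_scaled; auto.
Qed.

(** * Laplace transforms of the Khintchine exponents *)

Lemma tanh_exp_opp s : tanh s = (1 - exp (- (2 * s))) / (1 + exp (- (2 * s))).
Proof.
  unfold tanh, sinh, cosh. rewrite exp_opp_double_Rinv, exp_Ropp. pose proof (exp_pos s).
  field. split; [lra|nra].
Qed.

Lemma coth_exp_opp s : s <> 0 -> cosh s / sinh s = (1 + exp (- (2 * s))) / (1 - exp (- (2 * s))).
Proof.
  intros hs. unfold sinh, cosh. rewrite exp_opp_double_Rinv, exp_Ropp. pose proof (exp_pos s).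
  assert (exp s ^ 2 <> 1).
  { intros e. apply hs, exp_inv. rewrite exp_0. nra. }
  field. split; lra.
Qed.

Lemma div_sinh_exp_opp x : x <> 0 -> x / sinh x = 2 * x * exp (- x) / (1 - exp (- x) ^ 2).
Proof.
  intros hx. unfold sinh. rewrite exp_Ropp. pose proof (exp_pos x).
  assert (exp x ^ 2 <> 1).
  { intros e. apply hx, exp_inv. rewrite exp_0. nra. }
  field. split; lra.
Qed.

Lemma log_psi_C_integrand t s : 0 <= s ->
  fst (log_psi_C s) * exp (- (t * s)) =
  2 * hurwitz_kernel t 2 s - 4 * hurwitz_kernel t 4 s + s * exp (- (t * s)).
Proof.
  intros hs. unfold log_psi_C; simpl fst. destruct (Req_dec s 0) as [->|hs0].
  - rewrite !hurwitz_kernel_0. unfold tanh, sinh, cosh. rewrite Ropp_0, exp_0. field.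
  - rewrite !hurwitz_kernel_pos, exp_opp_quadruple, tanh_exp_opp by lra.
    pose proof (exp_opp_lt_1 (2 * s) ltac:(lra)). pose proof (exp_pos (- (2 * s))).
    field. repeat split; nra.
Qed.

Lemma log_psi_S_integrand t s : 0 <= s ->
  fst (log_psi_S s) * exp (- (t * s)) =
  exp (- (t * s)) + s * exp (- (t * s)) - 2 * hurwitz_kernel t 2 s.
Proof.
  intros hs. unfold log_psi_S; simpl fst. destruct (Req_EM_T s 0) as [->|hs0].
  - rewrite !hurwitz_kernel_0. rewrite Rmult_0_r, Ropp_0, exp_0. field.
  - rewrite !hurwitz_kernel_pos, coth_exp_opp by lra.
    pose proof (exp_opp_lt_1 (2 * s) ltac:(lra)). pose proof (exp_pos (- (2 * s))).
    field. lra.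
Qed.

Lemma log_psi_T_integrand t s : 0 <= s ->
  fst (log_psi_T s) * exp (- (t * s)) = 4 * hurwitz_kernel (t + 2) 4 s - exp (- (t * s)).
Proof.
  intros hs. unfold log_psi_T; simpl fst. destruct (Req_EM_T s 0) as [->|hs0].
  - rewrite !hurwitz_kernel_0, Rmult_0_r, Ropp_0, exp_0. field.
  - rewrite !hurwitz_kernel_pos, exp_opp_quadruple, exp_opp_mult_plus, div_sinh_exp_opp by lra.
    pose proof (exp_opp_lt_1 (2 * s) ltac:(lra)). pose proof (exp_pos (- (2 * s))).
    field. nra.
Qed.

Lemma is_RInt_0_inf_log_psi_C t : 0 < t ->
  is_RInt_0_inf (fun s => fst (log_psi_C s) * exp (- (t * s)))
    (2 * (hurwitz_zeta 2 (t / 2) / 2 ^ 2) - 4 * (hurwitz_zeta 2 (t / 4) / 4 ^ 2) + / t ^ 2).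
Proof.
  intros ht. apply (is_RInt_0_inf_ext _ _ _ (fun s hs => eq_sym (log_psi_C_integrand t s hs))).
  apply is_RInt_0_inf_plus; [apply is_RInt_0_inf_minus; apply is_RInt_0_inf_scal|].
  - apply is_RInt_0_inf_hurwitz_kernel; lra.
  - apply is_RInt_0_inf_hurwitz_kernel; lra.
  - apply is_RInt_0_inf_mul_exp; lra.
Qed.

Lemma is_RInt_0_inf_log_psi_S t : 0 < t ->
  is_RInt_0_inf (fun s => fst (log_psi_S s) * exp (- (t * s)))
    (/ t + / t ^ 2 - 2 * (hurwitz_zeta 2 (t / 2) / 2 ^ 2)).
Proof.
  intros ht. apply (is_RInt_0_inf_ext _ _ _ (fun s hs => eq_sym (log_psi_S_integrand t s hs))).
  apply is_RInt_0_inf_minus; [apply is_RInt_0_inf_plus|apply is_RInt_0_inf_scal].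
  - apply is_RInt_0_inf_exp; lra.
  - apply is_RInt_0_inf_mul_exp; lra.
  - apply is_RInt_0_inf_hurwitz_kernel; lra.
Qed.

Lemma is_RInt_0_inf_log_psi_T t : 0 < t ->
  is_RInt_0_inf (fun s => fst (log_psi_T s) * exp (- (t * s)))
    (4 * (hurwitz_zeta 2 ((t + 2) / 4) / 4 ^ 2) - / t).
Proof.
  intros ht. apply (is_RInt_0_inf_ext _ _ _ (fun s hs => eq_sym (log_psi_T_integrand t s hs))).
  apply is_RInt_0_inf_minus; [apply is_RInt_0_inf_scal|].
  - apply is_RInt_0_inf_hurwitz_kernel; lra.
  - apply is_RInt_0_inf_exp; lra.
Qed.

Lemma is_RInt_0_inf_log_psi_T_split t : 0 < t ->
  is_RInt_0_inf (fun s => fst (log_psi_T s) * exp (- (t * s)))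
    (4 * (hurwitz_zeta 2 (t / 2) / 2 ^ 2) - 4 * (hurwitz_zeta 2 (t / 4) / 4 ^ 2) - / t).
Proof.
  intros ht.
  apply (is_RInt_0_inf_ext
           (fun s => 4 * hurwitz_kernel t 2 s - 4 * hurwitz_kernel t 4 s - exp (- (t * s)))).
  - intros s hs. rewrite log_psi_T_integrand, (hurwitz_kernel_split t 2 s) by lra.
    replace (2 * 2) with 4 by ring. ring.
  - apply is_RInt_0_inf_minus; [apply is_RInt_0_inf_minus; apply is_RInt_0_inf_scal|].
    + apply is_RInt_0_inf_hurwitz_kernel; lra.
    + apply is_RInt_0_inf_hurwitz_kernel; lra.
    + apply is_RInt_0_inf_exp; lra.
Qed.

Lemma voiculescu_free_at_real (L : R -> C) (t A v : R) :
  (forall s, snd (L s) = 0) -> is_RInt_0_inf (fun s => fst (L s) * exp (- (t * s))) A ->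
  v = t ^ 2 * A -> voiculescu_free_at L t (0, v).
Proof.
  intros real hA ->. exists A, 0. split; [|split].
  - apply improper_integral_0_inf_of, hA.
  - apply improper_integral_0_inf_of.
    apply (is_RInt_0_inf_ext (fun _ => 0)); [|exact is_RInt_0_inf_0].
    intros s _. rewrite real. ring.
  - f_equal; ring.
Qed.

Theorem corollary5 (t : R) (ht : 0 < t) :
  voiculescu_free_at log_psi_C t
    (0, t ^ 2 / 2 * hurwitz_zeta 2 (t / 2) - t ^ 2 / 4 * hurwitz_zeta 2 (t / 4) + 1)
  /\
  voiculescu_free_at log_psi_S t
    (0, 1 + t - / 2 * t ^ 2 * hurwitz_zeta 2 (t / 2))
  /\
  voiculescu_free_at log_psi_T t
    (0, t * (t * hurwitz_zeta 2 (t / 2) - t / 4 * hurwitz_zeta 2 (t / 4) - 1))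
  /\
  voiculescu_free_at log_psi_T t
    (0, t * (t / 4 * hurwitz_zeta 2 ((t + 2) / 4) - 1)).
Proof.
  repeat split; eapply voiculescu_free_at_real; try reflexivity.
  - apply is_RInt_0_inf_log_psi_C; auto.
  - field; lra.
  - apply is_RInt_0_inf_log_psi_S; auto.
  - field; lra.
  - apply is_RInt_0_inf_log_psi_T_split; auto.
  - field; lra.
  - apply is_RInt_0_inf_log_psi_T; auto.
  - field; lra.
Qed.
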